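(* An atom of the lattice $\mathbf{Com}$ is a neutral element of $\mathbf{Com}$ if and only if it is one of the varieties $\mathcal{SL}$ or $\mathcal{ZM}$.
   Context: $\mathbf{Com}$ denotes the lattice of all commutative semigroup varieties. An element $x$ of a lattice is neutral if for all $y,z$: $(x\vee y)\wedge(y\vee z)\wedge(z\vee x)=(x\wedge y)\vee(y\wedge z)\vee(z\wedge x)$. $\mathcal{SL}=\operatorname{var}\{x^2=x,\ xy=yx\}$ is the variety of semilattices and $\mathcal{ZM}=\operatorname{var}\{xy=0\}$ the variety of null semigroups, where $xy=0$ abbreviates $xyz=zxy=xy$. *)

(* Varieties of commutative semigroups are represented by their
   equational theories (fully invariant congruences on the free semigroup over
   countably many variables containing associativity and commutativity).
   By Birkhoff's theorem this is an anti-isomorphism with the lattice Com. *)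

Inductive term : Type :=
| Var : nat -> term
| Mul : term -> term -> term.

Fixpoint subst (s : nat -> term) (t : term) : term :=
  match t with
  | Var n => s n
  | Mul a b => Mul (subst s a) (subst s b)
  end.

Definition rel := term -> term -> Prop.

Definition subrel (E F : rel) : Prop := forall a b, E a b -> F a b.
Definition releq (E F : rel) : Prop := forall a b, E a b <-> F a b.

Definition is_com_theory (E : rel) : Prop :=
  (forall a, E a a) /\
  (forall a b, E a b -> E b a) /\
  (forall a b c, E a b -> E b c -> E a c) /\
  (forall a b c d, E a b -> E c d -> E (Mul a c) (Mul b d)) /\
  (forall a b (s : nat -> term), E a b -> E (subst s a) (subst s b)) /\
  (forall a b c, E (Mul (Mul a b) c) (Mul a (Mul b c))) /\
  (forall a b, E (Mul a b) (Mul b a)).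

Definition gen (I : rel) : rel :=
  fun a b => forall E, is_com_theory E -> subrel I E -> E a b.

(* the trivial variety (bottom of Com): all identities hold *)
Definition full : rel := fun _ _ => True.

Definition vle (V W : rel) : Prop := subrel W V.

Definition vjoin (V W : rel) : rel := fun a b => V a b /\ W a b.
Definition vmeet (V W : rel) : rel := gen (fun a b => V a b \/ W a b).

Definition neutral (x : rel) : Prop :=
  forall y z, is_com_theory y -> is_com_theory z ->
    releq (vmeet (vmeet (vjoin x y) (vjoin y z)) (vjoin z x))
          (vjoin (vjoin (vmeet x y) (vmeet y z)) (vmeet z x)).

Definition atom (x : rel) : Prop :=
  is_com_theory x /\ ~ releq x full /\
  forall y, is_com_theory y -> vle y x -> releq y full \/ releq y x.

Definition x0 := Var 0.
Definition x1 := Var 1.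
Definition x2 := Var 2.

Definition SL : rel :=
  gen (fun a b => a = Mul x0 x0 /\ b = x0).

Definition ZM : rel :=
  gen (fun a b => (a = Mul (Mul x0 x1) x2 /\ b = Mul x0 x1) \/
                  (a = Mul (Mul x2 x0) x1 /\ b = Mul x0 x1)).

From Stdlib Require Import Arith Lia List Permutation Classical.

(* The theory of SL consists of the
   identities whose sides have the same variables; that of ZM of the identities that hold up to
   associativity-commutativity or whose sides both have length at least 2.

   A theory A is neutral as soon as it satisfies the modular law at A and, whenever neither Y nor
   Z is contained in A, Y is generated by the intersections of A, Y, Z taken in pairs. For ZM both
   follow from the fact that every theory not contained in it satisfies x = x^(m+1) for some
   m >= 1: replacing every variable by its (m+1)-st power turns any identity into one between
   words of length at least 2. For SL both follow from the fact that every theory not contained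
   in it satisfies x^N = x^N y^N for some N, so that the two sides of an identity whose sides
   have different variables each absorb a common power.

   Conversely, let V be a neutral atom other than SL and ZM. Then V satisfies x = x^(m+1) but
   neither x = x^2 nor x^2 y = x y^2. Take Y the theory of var{x1 x2 x3 x4 = 0} and Z the theory
   that moreover identifies words of length 3 with the same variables. In the median identity
   for V, Y, Z the right-hand side contains x^2 y = x y^2, since V is an atom; but the left-hand
   side is generated by the pairwise intersections of the theories V, Y, Z, each of which lies
   in Y, and Y does not contain it. *)

Fixpoint leaves (t : term) : list nat :=
  match t with Var n => n :: nil | Mul a b => leaves a ++ leaves b end.

Fixpoint occ (t : term) (x : nat) : nat :=
  match t with Var n => if Nat.eqb n x then 1 else 0 | Mul a b => occ a x + occ b x end.

Fixpoint len (t : term) : nat :=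
  match t with Var _ => 1 | Mul a b => len a + len b end.

Definition ac_eq (a b : term) : Prop := forall x, occ a x = occ b x.
Definition occurs (t : term) (x : nat) : Prop := 0 < occ t x.
Definition same_vars (a b : term) : Prop := forall x, occurs a x <-> occurs b x.

Lemma occ_leaves t x : occ t x = count_occ Nat.eq_dec (leaves t) x.
Proof.
  induction t; simpl.
  - destruct (Nat.eq_dec n x); destruct (Nat.eqb_spec n x); congruence.
  - rewrite count_occ_app; congruence.
Qed.

Lemma len_leaves t : len t = length (leaves t).
Proof. induction t; simpl; auto. rewrite length_app; auto. Qed.

Lemma ac_eq_perm a b : ac_eq a b <-> Permutation (leaves a) (leaves b).
Proof.
  rewrite Permutation_count_occ with (eq_dec := Nat.eq_dec).
  unfold ac_eq; split; intros H x; specialize (H x); rewrite ?occ_leaves in *; auto.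
Qed.

Lemma ac_eq_len a b : ac_eq a b -> len a = len b.
Proof. intro H; apply ac_eq_perm in H; rewrite !len_leaves; apply Permutation_length; auto. Qed.

Lemma len_pos t : 1 <= len t.
Proof. induction t; simpl; lia. Qed.

Lemma occ_le_len t x : occ t x <= len t.
Proof. induction t; simpl; [destruct (Nat.eqb n x)|]; lia. Qed.

Lemma ac_eq_refl a : ac_eq a a. Proof. intro; auto. Qed.
Lemma ac_eq_sym a b : ac_eq a b -> ac_eq b a. Proof. intros H x; auto. Qed.
Lemma ac_eq_trans a b c : ac_eq a b -> ac_eq b c -> ac_eq a c.
Proof. intros H1 H2 x; rewrite H1; auto. Qed.

Lemma occurs_Mul a b x : occurs (Mul a b) x <-> occurs a x \/ occurs b x.
Proof. unfold occurs; simpl; lia. Qed.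

Lemma occurs_Var n x : occurs (Var n) x <-> n = x.
Proof. unfold occurs; simpl; destruct (Nat.eqb_spec n x); split; intros; lia. Qed.

Lemma occurs_dec t x : {occurs t x} + {~ occurs t x}.
Proof. unfold occurs; apply lt_dec. Qed.

Lemma exists_occurs t : exists x, occurs t x.
Proof.
  induction t; [exists n; apply occurs_Var; auto|].
  destruct IHt1 as (x & ?); exists x; apply occurs_Mul; auto.
Qed.

Lemma ac_eq_occurs a b x : ac_eq a b -> (occurs a x <-> occurs b x).
Proof. unfold occurs; intro H; rewrite H; tauto. Qed.

Lemma ac_eq_same_vars a b : ac_eq a b -> same_vars a b.
Proof. intros H x; apply ac_eq_occurs; auto. Qed.

Lemma not_same_vars a b : ~ same_vars a b ->
  (exists n, occurs b n /\ ~ occurs a n) \/ (exists n, occurs a n /\ ~ occurs b n).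
Proof.
  intro H. apply NNPP; intro H'. apply H. intro x. apply not_or_and in H' as (H1 & H2).
  split; intro Hx; apply NNPP; intro Hy; [apply H2|apply H1]; eauto.
Qed.

Lemma len1_Var t : len t = 1 -> exists n, t = Var n.
Proof. destruct t; simpl; eauto. pose proof (len_pos t1); pose proof (len_pos t2); lia. Qed.

Lemma occ2_le_len t p k : p <> k -> occ t p + occ t k <= len t.
Proof. intro; induction t; simpl; [destruct (Nat.eqb_spec n p), (Nat.eqb_spec n k)|]; lia. Qed.

Lemma occ_only t p : (forall k, k <> p -> occ t k = 0) -> occ t p = len t.
Proof.
  induction t; simpl; intros H.
  - destruct (Nat.eqb_spec n p); auto. specialize (H n). rewrite Nat.eqb_refl in H. lia.
  - rewrite IHt1, IHt2; auto; intros k Hk; specialize (H k Hk); lia.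
Qed.

Lemma sub_list (l1 l2 : list nat) :
  (forall x, count_occ Nat.eq_dec l1 x <= count_occ Nat.eq_dec l2 x) ->
  exists L, Permutation l2 (l1 ++ L).
Proof.
  revert l2; induction l1 as [|h t IH]; intros l2 H.
  - exists l2; auto.
  - assert (Hin : In h l2).
    { apply (count_occ_In Nat.eq_dec). specialize (H h); simpl in H.
      destruct (Nat.eq_dec h h); [lia|congruence]. }
    apply in_split in Hin as (p & r & ->).
    destruct (IH (p ++ r)) as (L & HL).
    { intro x. specialize (H x). simpl in H. rewrite count_occ_app in *. simpl in H.
      destruct (Nat.eq_dec h x); lia. }
    exists L. simpl. eapply Permutation_trans; [apply Permutation_sym, Permutation_middle|].
    apply perm_skip; auto.
Qed.

Fixpoint of_list (l : list nat) : term :=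
  match l with
  | nil => Var 0
  | n :: nil => Var n
  | n :: l' => Mul (Var n) (of_list l')
  end.

Lemma leaves_of_list l : l <> nil -> leaves (of_list l) = l.
Proof.
  induction l as [|n l IH]; intro H; [congruence|].
  destruct l as [|m l']; simpl; auto.
  simpl in IH. rewrite IH by discriminate. auto.
Qed.

Lemma leaves_neq_nil t : leaves t <> nil.
Proof. induction t; simpl; [discriminate|]. destruct (leaves t1); [congruence|discriminate]. Qed.

Lemma ac_eq_factor s u : (forall x, occ s x <= occ u x) -> (exists x, occ s x < occ u x) ->
  exists z, ac_eq u (Mul s z).
Proof.
  intros H1 (x & H2).
  destruct (sub_list (leaves s) (leaves u)) as (L & HL).
  { intro y; rewrite <- !occ_leaves; auto. }
  assert (HLn : L <> nil).
  { intro; subst. rewrite app_nil_r in HL. apply ac_eq_perm in HL. specialize (HL x). lia. }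
  exists (of_list L). apply ac_eq_perm. simpl. rewrite leaves_of_list; auto.
Qed.

Definition is_cong (E : rel) : Prop :=
  (forall a, E a a) /\
  (forall a b, E a b -> E b a) /\
  (forall a b c, E a b -> E b c -> E a c) /\
  (forall a b c d, E a b -> E c d -> E (Mul a c) (Mul b d)) /\
  (forall a b c, E (Mul (Mul a b) c) (Mul a (Mul b c))) /\
  (forall a b, E (Mul a b) (Mul b a)).

Section Congruence.
Variable E : rel.
Hypothesis HE : is_cong E.

Lemma cong_of_list_app l1 l2 : l1 <> nil -> l2 <> nil ->
  E (Mul (of_list l1) (of_list l2)) (of_list (l1 ++ l2)).
Proof.
  pose proof HE as (Hr&Hs&Ht&Hc&Ha&Hm).
  revert l2; induction l1 as [|n l1 IH]; intros l2 H1 H2; [congruence|].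
  destruct l1 as [|m l1'].
  - simpl. destruct l2; [congruence|]. apply Hr.
  - change (of_list (n :: m :: l1')) with (Mul (Var n) (of_list (m :: l1'))).
    eapply Ht; [apply Ha|].
    change (of_list ((n :: m :: l1') ++ l2)) with (Mul (Var n) (of_list ((m :: l1') ++ l2))).
    apply Hc; [apply Hr|]. apply IH; [discriminate|auto].
Qed.

Lemma cong_of_list_leaves t : E t (of_list (leaves t)).
Proof.
  pose proof HE as (Hr&Hs&Ht&Hc&Ha&Hm). induction t; simpl.
  - apply Hr.
  - eapply Ht; [apply Hc; [exact IHt1|exact IHt2]|].
    apply cong_of_list_app; apply leaves_neq_nil.
Qed.

Lemma cong_of_list_perm l1 l2 : Permutation l1 l2 -> E (of_list l1) (of_list l2).
Proof.
  pose proof HE as (Hr&Hs&Ht&Hc&Ha&Hm). intros P. induction P.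
  - apply Hr.
  - destruct l as [|a l].
    + apply Permutation_nil in P; subst; apply Hr.
    + destruct l' as [|b l']. { apply Permutation_sym, Permutation_nil in P; discriminate. }
      change (E (Mul (Var x) (of_list (a :: l))) (Mul (Var x) (of_list (b :: l')))). apply Hc; auto.
  - destruct l as [|a l].
    + simpl. apply Hm.
    + change (E (Mul (Var y) (Mul (Var x) (of_list (a :: l))))
                (Mul (Var x) (Mul (Var y) (of_list (a :: l))))).
      eapply Ht; [apply Hs, Ha|]. eapply Ht; [apply Hc; [apply Hm|apply Hr]|]. apply Ha.
  - eauto.
Qed.

Lemma cong_ac_eq a b : ac_eq a b -> E a b.
Proof.
  pose proof HE as (Hr&Hs&Ht&Hc&Ha&Hm). intro H.
  apply ac_eq_perm in H. apply (Ht _ (of_list (leaves a))); [apply cong_of_list_leaves|].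
  apply (Ht _ (of_list (leaves b))); [apply cong_of_list_perm; auto|].
  apply Hs, cong_of_list_leaves.
Qed.

End Congruence.

Lemma subst_comp s t a : subst s (subst t a) = subst (fun k => subst s (t k)) a.
Proof. induction a; simpl; congruence. Qed.

Lemma subst_id a : subst Var a = a.
Proof. induction a; simpl; congruence. Qed.

Lemma subst_ext s s' a : (forall k, occurs a k -> s k = s' k) -> subst s a = subst s' a.
Proof.
  induction a; simpl; intros H.
  - apply H, occurs_Var; auto.
  - rewrite IHa1, IHa2; auto; intros k Hk; apply H, occurs_Mul; auto.
Qed.

Lemma occurs_subst s a x : occurs (subst s a) x <-> exists k, occurs a k /\ occurs (s k) x.
Proof.
  induction a; simpl.
  - split; [intro; exists n; split; auto; apply occurs_Var; auto|].
    intros (k & Hk & Hx). apply occurs_Var in Hk; subst; auto.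
  - rewrite occurs_Mul, IHa1, IHa2. split.
    + intros [(k&?&?)|(k&?&?)]; exists k; rewrite occurs_Mul; auto.
    + intros (k & Hk & Hx); apply occurs_Mul in Hk as [?|?]; [left|right]; eauto.
Qed.

Lemma len_le_subst s a : len a <= len (subst s a).
Proof. induction a; simpl; [apply len_pos|lia]. Qed.

Lemma ac_eq_subst s a b : ac_eq a b -> ac_eq (subst s a) (subst s b).
Proof.
  apply (cong_ac_eq (fun a b => ac_eq (subst s a) (subst s b))).
  repeat split; unfold ac_eq; simpl; intros; try lia; try congruence.
Qed.

Lemma ac_eq_subst_pointwise s s' a : (forall k, ac_eq (s k) (s' k)) ->
  ac_eq (subst s a) (subst s' a).
Proof. intros H; induction a; simpl; auto. intro x; simpl; rewrite IHa1, IHa2; auto. Qed.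

(** [powS t n] is [t^(n+1)] and [mulpow s z k] is [s z^k]. *)
Fixpoint powS (t : term) (n : nat) : term :=
  match n with 0 => t | S n => Mul (powS t n) t end.

Fixpoint mulpow (s z : term) (k : nat) : term :=
  match k with 0 => s | S k => Mul (mulpow s z k) z end.

Lemma occ_powS t n x : occ (powS t n) x = S n * occ t x.
Proof. induction n; simpl in *; lia. Qed.
Lemma occ_mulpow s z k x : occ (mulpow s z k) x = occ s x + k * occ z x.
Proof. induction k; simpl in *; lia. Qed.
Lemma len_powS t n : len (powS t n) = S n * len t.
Proof. induction n; simpl in *; lia. Qed.
Lemma subst_powS s t n : subst s (powS t n) = powS (subst s t) n.
Proof. induction n; simpl; congruence. Qed.
Lemma subst_mulpow s a z k : subst s (mulpow a z k) = mulpow (subst s a) (subst s z) k.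
Proof. induction k; simpl; congruence. Qed.
Lemma occurs_powS t n x : occurs (powS t n) x <-> occurs t x.
Proof. unfold occurs; rewrite occ_powS; nia. Qed.

Lemma subst_powS_vars tau m t :
  ac_eq (subst (fun k => powS (tau k) m) t) (powS (subst tau t) m).
Proof.
  induction t; simpl; [apply ac_eq_refl|]. intro x; simpl. rewrite IHt1, IHt2, !occ_powS. simpl. nia.
Qed.

Ltac ac_solve :=
  unfold ac_eq; intro; simpl; rewrite ?occ_powS, ?occ_mulpow; simpl;
  rewrite ?occ_powS, ?occ_mulpow; nia.

Ltac eqbs := repeat match goal with |- context [Nat.eqb ?a ?b] => destruct (Nat.eqb_spec a b) end.

Section Theory.
Variable E : rel.
Hypothesis HE : is_com_theory E.

Lemma th_refl a : E a a. Proof. destruct HE as (?&?&?&?&?&?&?); auto. Qed.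
Lemma th_sym a b : E a b -> E b a. Proof. destruct HE as (?&?&?&?&?&?&?); auto. Qed.
Lemma th_trans a b c : E a b -> E b c -> E a c. Proof. destruct HE as (?&?&?&?&?&?&?); eauto. Qed.
Lemma th_mul a b c d : E a b -> E c d -> E (Mul a c) (Mul b d).
Proof. destruct HE as (?&?&?&?&?&?&?); auto. Qed.
Lemma th_subst a b s : E a b -> E (subst s a) (subst s b).
Proof. destruct HE as (?&?&?&?&?&?&?); auto. Qed.
Lemma th_ac a b : ac_eq a b -> E a b.
Proof. apply cong_ac_eq. destruct HE as (?&?&?&?&?&?&?); repeat split; auto. Qed.
Lemma th_mulL a b c : E a b -> E (Mul a c) (Mul b c). Proof. intro; apply th_mul; auto using th_refl. Qed.
Lemma th_mulR a b c : E a b -> E (Mul c a) (Mul c b). Proof. intro; apply th_mul; auto using th_refl. Qed.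

Lemma th_powS a b k : E a b -> E (powS a k) (powS b k).
Proof. intro H; induction k; simpl; auto. apply th_mul; auto. Qed.

Lemma th_mulpow a b z k : E a b -> E (mulpow a z k) (mulpow b z k).
Proof. intro H; induction k; simpl; auto. apply th_mulL; auto. Qed.

Lemma th_absorb_mulpow s z : E s (Mul s z) -> forall k, E s (mulpow s z k).
Proof.
  intros H k. induction k; simpl; [apply th_refl|].
  apply (th_trans _ (Mul s z)); auto. apply th_mulL; auto.
Qed.

Lemma th_absorb_powS s z : E s (Mul s z) -> forall k, E s (Mul s (powS z k)).
Proof.
  intros H k. apply (th_trans _ (mulpow s z (S k))); [apply th_absorb_mulpow; auto|].
  apply th_ac. ac_solve.
Qed.

End Theory.

Ltac chain t := match goal with H : is_com_theory ?E |- ?E _ _ => apply (th_trans _ H _ t) end.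

Lemma gen_theory I : is_com_theory (gen I).
Proof.
  unfold gen; repeat split; intros;
  match goal with H : is_com_theory ?E |- _ => pose proof H as (?&?&?&?&?&?&?) end;
  repeat match goal with H : forall E, is_com_theory E -> subrel I E -> E ?x ?y |- _ =>
     let h := fresh in pose proof (H _ ltac:(eassumption) ltac:(eassumption)) as h; clear H end;
  eauto.
Qed.

Lemma gen_incl (I : rel) a b : I a b -> gen I a b.
Proof. intros H E HE HI; auto. Qed.

Lemma gen_min (I E : rel) : is_com_theory E -> subrel I E -> subrel (gen I) E.
Proof. intros HE HI a b H; apply H; auto. Qed.

Lemma vmeet_l Y Z a b : Y a b -> vmeet Y Z a b. Proof. intro; apply gen_incl; auto. Qed.
Lemma vmeet_r Y Z a b : Z a b -> vmeet Y Z a b. Proof. intro; apply gen_incl; auto. Qed.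

Lemma vmeet_comm Y Z a b : vmeet Y Z a b -> vmeet Z Y a b.
Proof. apply gen_min; [apply gen_theory|]. intros x y [?|?]; [apply vmeet_r|apply vmeet_l]; auto. Qed.

Lemma vmeet_min Y Z L : is_com_theory L -> subrel Y L -> subrel Z L -> subrel (vmeet Y Z) L.
Proof. intros HL H1 H2. apply gen_min; auto. intros x y [?|?]; auto. Qed.

Lemma vjoin_theory X Y : is_com_theory X -> is_com_theory Y -> is_com_theory (vjoin X Y).
Proof.
  intros (?&?&?&?&?&?&?) (?&?&?&?&?&?&?); unfold vjoin; repeat split; intros;
  repeat match goal with H : _ /\ _ |- _ => destruct H end; eauto.
Qed.

Lemma full_of_x0_x1 V : is_com_theory V -> V x0 x1 -> releq V full.
Proof.
  intros HV H a b; split; [constructor|intros _].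
  apply (th_subst _ HV _ _ (fun k => match k with 0 => a | _ => b end)) in H. exact H.
Qed.

(** * The theories of [SL] and [ZM] *)

Definition nil_rel (n : nat) (a b : term) : Prop := ac_eq a b \/ (n <= len a /\ n <= len b).

Lemma same_vars_theory : is_com_theory same_vars.
Proof.
  unfold same_vars; repeat split; intros; try tauto.
  - apply H; auto. - apply H; auto.
  - apply H0, H; auto. - apply H, H0; auto.
  - rewrite occurs_Mul in *. rewrite <- H, <- H0; auto.
  - rewrite occurs_Mul in *. rewrite H, H0; auto.
  - rewrite occurs_subst in *. destruct H0 as (k&?&?); exists k; rewrite <- H; auto.
  - rewrite occurs_subst in *. destruct H0 as (k&?&?); exists k; rewrite H; auto.
  - rewrite !occurs_Mul in *; tauto. - rewrite !occurs_Mul in *; tauto.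
  - rewrite !occurs_Mul in *; tauto. - rewrite !occurs_Mul in *; tauto.
Qed.

Lemma nil_rel_theory n : is_com_theory (nil_rel n).
Proof.
  unfold nil_rel; repeat split; intros.
  - left; apply ac_eq_refl.
  - destruct H as [H|H]; [left; apply ac_eq_sym|right]; tauto.
  - destruct H as [H|H], H0 as [H0|H0]; [left; eapply ac_eq_trans; eauto|right..];
      try apply ac_eq_len in H; try apply ac_eq_len in H0; lia.
  - destruct H as [H|H], H0 as [H0|H0].
    + left; intro x; simpl; rewrite H, H0; auto.
    + right; apply ac_eq_len in H; simpl; lia.
    + right; apply ac_eq_len in H0; simpl; lia.
    + right; simpl; lia.
  - destruct H as [H|H]; [left; apply ac_eq_subst; auto|right].
    pose proof (len_le_subst s a); pose proof (len_le_subst s b); lia.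
  - left; ac_solve.
  - left; ac_solve.
Qed.

Lemma occurs_factor_Var u n : occurs u n -> ac_eq u (Var n) \/ exists r, ac_eq u (Mul (Var n) r).
Proof.
  intro H. destruct (classic (exists x, occ (Var n) x < occ u x)) as [Hs|Hs].
  - right. apply ac_eq_factor; auto.
    intro x; simpl. destruct (Nat.eqb_spec n x); subst; unfold occurs in H; lia.
  - left. intro x. destruct (Nat.eqb_spec n x); subst; simpl.
    + rewrite Nat.eqb_refl.
      assert (~ (1 < occ u x)) by (intro; apply Hs; exists x; simpl; rewrite Nat.eqb_refl; auto).
      unfold occurs in H; lia.
    + assert (~ (0 < occ u x))
        by (intro; apply Hs; exists x; simpl; destruct (Nat.eqb_spec n x); auto; lia).
      destruct (Nat.eqb_spec n x); lia.
Qed.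

Lemma idempotent_absorb E : is_com_theory E -> E (Mul x0 x0) x0 ->
  forall v u, (forall x, occurs v x -> occurs u x) -> E u (Mul u v).
Proof.
  intros HE Hg. assert (Hid : forall n, E (Mul (Var n) (Var n)) (Var n)).
  { intro n. apply (th_subst _ HE _ _ (fun _ => Var n)) in Hg. exact Hg. }
  induction v; intros u Hc.
  - assert (occurs u n) by (apply Hc, occurs_Var; auto).
    destruct (occurs_factor_Var u n H) as [H1|(r&H1)].
    + chain (Var n); [apply th_ac; auto|]. chain (Mul (Var n) (Var n)); [apply th_sym; auto|].
      apply th_ac; auto. intro x; simpl. rewrite H1; simpl; auto.
    + chain (Mul (Var n) r); [apply th_ac; auto|]. chain (Mul (Mul (Var n) (Var n)) r).
      { apply th_mulL; auto. apply th_sym; auto. }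
      apply th_ac; auto. intro x; simpl. rewrite H1; simpl; lia.
  - assert (E u (Mul u v1)) by (apply IHv1; intros; apply Hc, occurs_Mul; auto).
    assert (E u (Mul u v2)) by (apply IHv2; intros; apply Hc, occurs_Mul; auto).
    chain (Mul u v2); auto. chain (Mul (Mul u v1) v2); [apply th_mulL; auto|].
    apply th_ac; auto. ac_solve.
Qed.

Lemma SL_same_vars a b : SL a b <-> same_vars a b.
Proof.
  split.
  - apply gen_min; [apply same_vars_theory|]. intros x y (->&->). intro z; rewrite occurs_Mul; tauto.
  - intro H. assert (HE : is_com_theory SL) by apply gen_theory.
    assert (Hg : SL (Mul x0 x0) x0) by (apply gen_incl; auto).
    chain (Mul a b); [apply idempotent_absorb; auto; intros; apply H; auto|].
    chain (Mul b a); [apply th_ac; auto; ac_solve|].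
    apply th_sym; auto. apply idempotent_absorb; auto. intros; apply H; auto.
Qed.

Lemma null_products_eq E : is_com_theory E -> E (Mul (Mul x0 x1) x2) (Mul x0 x1) ->
  forall a b c d, E (Mul a b) (Mul c d).
Proof.
  intros HE Hg a b c d.
  assert (G : forall p q r, E (Mul (Mul p q) r) (Mul p q)).
  { intros p q r.
    apply (th_subst _ HE _ _ (fun k => match k with 0 => p | 1 => q | _ => r end)) in Hg. exact Hg. }
  chain (Mul (Mul a b) (Mul c d)); [apply th_sym, G; auto|].
  chain (Mul (Mul c d) (Mul a b)); [apply th_ac; auto; ac_solve|]. apply G.
Qed.

Lemma null_long_eq E : is_com_theory E -> E (Mul (Mul x0 x1) x2) (Mul x0 x1) ->
  forall u, 2 <= len u -> E u (Mul x0 x1).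
Proof.
  intros HE Hg u Hu. destruct u as [n|u1 u2]; [simpl in Hu; lia|].
  destruct (exists_occurs u1) as (p&Hp). destruct (exists_occurs u2) as (q&Hq).
  chain (Mul (Var p) (Var q)); [|apply null_products_eq; auto].
  destruct (classic (exists x, occ (Mul (Var p) (Var q)) x < occ (Mul u1 u2) x)) as [Hs|Hs].
  - destruct (ac_eq_factor (Mul (Var p) (Var q)) (Mul u1 u2)) as (r&Hr); auto.
    { intro x; unfold occurs in *; simpl.
      destruct (Nat.eqb_spec p x), (Nat.eqb_spec q x); subst; lia. }
    chain (Mul (Mul (Var p) (Var q)) r); [apply th_ac; auto|].
    apply (th_subst _ HE _ _ (fun k => match k with 0 => Var p | 1 => Var q | _ => r end)) in Hg.
    exact Hg.
  - apply th_ac; auto. intro x.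
    assert (occ (Mul (Var p) (Var q)) x <= occ (Mul u1 u2) x).
    { unfold occurs in *; simpl. destruct (Nat.eqb_spec p x), (Nat.eqb_spec q x); subst; lia. }
    assert (~ occ (Mul (Var p) (Var q)) x < occ (Mul u1 u2) x) by (intro; apply Hs; eauto). lia.
Qed.

Lemma ZM_nil_rel a b : ZM a b <-> nil_rel 2 a b.
Proof.
  split.
  - apply gen_min; [apply nil_rel_theory|]. intros x y [(->&->)|(->&->)]; right; simpl; lia.
  - intro H. assert (HE : is_com_theory ZM) by apply gen_theory.
    assert (Hg : ZM (Mul (Mul x0 x1) x2) (Mul x0 x1)) by (apply gen_incl; auto).
    destruct H as [H|(Ha&Hb)]; [apply th_ac; auto|].
    chain (Mul x0 x1); [apply null_long_eq; auto|apply th_sym, null_long_eq; auto].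
Qed.

(** * A criterion for neutrality *)

(* In the lattice of theories ([vmeet] = join, [vjoin] = meet) this is the modular law at [A]:
   [A /\ (Y \/ Z) <= Y \/ (Z /\ A)] for [Y <= A]; the case [Z <= A] is trivial. *)
Definition modular_cond (A : rel) : Prop :=
  forall Y Z L, is_com_theory Y -> is_com_theory Z -> is_com_theory L ->
  subrel Y A -> ~ subrel Z A -> subrel Y L -> subrel (vjoin Z A) L ->
  subrel (vjoin A (vmeet Y Z)) L.

Definition median_cond (A : rel) : Prop :=
  forall Y Z L, is_com_theory Y -> is_com_theory Z -> is_com_theory L ->
  ~ subrel Y A -> ~ subrel Z A ->
  subrel (vjoin A Y) L -> subrel (vjoin Y Z) L -> subrel (vjoin Z A) L -> subrel Y L.

Lemma neutral_of_conds A : is_com_theory A -> modular_cond A -> median_cond A -> neutral A.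
Proof.
  intros HA C1 C2 Y Z HY HZ a b.
  set (L := vmeet (vmeet (vjoin A Y) (vjoin Y Z)) (vjoin Z A)).
  assert (HL : is_com_theory L) by apply gen_theory.
  assert (LAY : subrel (vjoin A Y) L) by (intros ? ? ?; apply vmeet_l, vmeet_l; auto).
  assert (LYZ : subrel (vjoin Y Z) L) by (intros ? ? ?; apply vmeet_l, vmeet_r; auto).
  assert (LZA : subrel (vjoin Z A) L) by (intros ? ? ?; apply vmeet_r; auto).
  split.
  - revert a b. apply vmeet_min; [repeat apply vjoin_theory; apply gen_theory| |].
    + apply vmeet_min; [repeat apply vjoin_theory; apply gen_theory| |].
      * intros x y (H1&H2). repeat split; [apply vmeet_l|apply vmeet_l|apply vmeet_r]; auto.
      * intros x y (H1&H2). repeat split; [apply vmeet_r|apply vmeet_l|apply vmeet_l]; auto.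
    + intros x y (H1&H2). repeat split; [apply vmeet_l|apply vmeet_r|apply vmeet_l]; auto.
  - intros ((H1&H2)&H3).
    destruct (classic (subrel Y A)) as [YA|YA]; destruct (classic (subrel Z A)) as [ZA|ZA].
    + revert H2. apply vmeet_min; auto; intros x y ?; [apply LAY|apply LZA]; split; auto.
    + assert (A a b) by (revert H1; apply vmeet_min; auto; intros x y ?; auto).
      apply (C1 Y Z L); auto; [|split; auto]. intros x y ?; apply LAY; split; auto.
    + assert (A a b) by (revert H3; apply vmeet_min; auto; intros x y ?; auto).
      apply (C1 Z Y L); auto; [intros x y ?; apply LZA; split; auto| |split; auto; apply vmeet_comm; auto].
      intros x y (?&?); apply LAY; split; auto.
    + revert H2. apply vmeet_min; auto.
      * apply (C2 Y Z L); auto.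
      * apply (C2 Z Y L); auto; intros x y (?&?); [apply LZA|apply LYZ|apply LAY]; split; auto.
Qed.

(** * [ZM] is neutral *)

Definition has_period (E : rel) (m : nat) : Prop := 1 <= m /\ E x0 (powS x0 m).

Lemma Var_eq_period Z k b : is_com_theory Z -> Z (Var k) b -> ~ ac_eq (Var k) b ->
  exists m, has_period Z m.
Proof.
  intros HZ H Hn.
  set (s := fun j => if Nat.eqb j k then x0 else Mul x0 x0).
  assert (Hc : forall t x, occ (subst s t) x = if Nat.eqb x 0 then 2 * len t - occ t k else 0).
  { induction t; intro x.
    - unfold s; simpl. eqbs; simpl; try lia.
      all: subst; simpl; try lia; destruct x; simpl; try lia; congruence.
    - simpl. rewrite IHt1, IHt2. pose proof (occ_le_len t1 k); pose proof (occ_le_len t2 k).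
      destruct (Nat.eqb x 0); lia. }
  assert (Hge : 2 <= 2 * len b - occ b k).
  { pose proof (occ_le_len b k).
    destruct (Nat.eq_dec (len b) 1) as [E1|E1]; [|pose proof (len_pos b); lia].
    destruct (len1_Var b E1) as (j & ->). simpl.
    destruct (Nat.eqb_spec j k); [subst; exfalso; apply Hn, ac_eq_refl|lia]. }
  exists (2 * len b - occ b k - 1). split; [lia|].
  apply (th_subst _ HZ _ _ s) in H. simpl in H. unfold s at 1 in H. rewrite Nat.eqb_refl in H.
  chain (subst s b); auto. apply th_ac; auto. intro x. rewrite Hc, occ_powS. simpl.
  destruct x; simpl; lia.
Qed.

Lemma period_of_not_sub_nil Z : is_com_theory Z -> ~ subrel Z (nil_rel 2) ->
  exists m, has_period Z m.
Proof.
  intros HZ Hn. apply not_all_ex_not in Hn as (a & Hn). apply not_all_ex_not in Hn as (b & Hn).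
  apply imply_to_and in Hn as (H1 & H2). unfold nil_rel in H2.
  apply not_or_and in H2 as (H2 & H3).
  destruct (Nat.eq_dec (len a) 1) as [E1|E1].
  - destruct (len1_Var a E1) as (k & ->). eapply Var_eq_period; eauto.
  - assert (len b = 1) by (pose proof (len_pos a); pose proof (len_pos b); lia).
    destruct (len1_Var b H) as (k & ->). apply (Var_eq_period Z k a); auto; [apply th_sym; auto|].
    intro; apply H2, ac_eq_sym; auto.
Qed.

Lemma period_powS E m : is_com_theory E -> has_period E m -> forall k t, E t (powS t (k * m)).
Proof.
  intros HE (Hm & H) k t.
  assert (H1 : E x0 (Mul x0 (powS x0 (m - 1)))) by (chain (powS x0 m); auto; apply th_ac; auto; ac_solve).
  pose proof (th_absorb_mulpow E HE _ _ H1 k) as H2.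
  apply (th_subst _ HE _ _ (fun _ => t)) in H2. rewrite subst_mulpow, subst_powS in H2. simpl in H2.
  chain (mulpow t (powS t (m - 1)) k); auto. apply th_ac; auto. ac_solve.
Qed.

Lemma len_subst_ge2 s a : (forall k, 2 <= len (s k)) -> 2 <= len (subst s a).
Proof. intro H; induction a; simpl; auto. lia. Qed.

Lemma median_cond_ZM A : releq A (nil_rel 2) -> median_cond A.
Proof.
  intros HA Y Z L HY HZ HL nY nZ LAY LYZ LZA a b H.
  assert (nYn : ~ subrel Y (nil_rel 2)) by (intro HYn; apply nY; intros ? ? ?; apply HA; auto).
  assert (nZn : ~ subrel Z (nil_rel 2)) by (intro HZn; apply nZ; intros ? ? ?; apply HA; auto).
  destruct (period_of_not_sub_nil Y HY nYn) as (m1 & P1).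
  destruct (period_of_not_sub_nil Z HZ nZn) as (m2 & P2).
  set (M := m2 * m1).
  assert (HM : forall t, L t (powS t M)).
  { intro t. apply LYZ; split; [apply (period_powS Y m1); auto|].
    unfold M; rewrite Nat.mul_comm. apply (period_powS Z m2); auto. }
  chain (powS a M); auto. chain (powS b M); [|apply th_sym; auto].
  apply LAY; split; [|apply th_powS; auto]. apply HA. right. rewrite !len_powS.
  pose proof (len_pos a); pose proof (len_pos b); destruct P1, P2. unfold M; nia.
Qed.

Definition pow_inst_rel (L : rel) (m : nat) (a b : term) : Prop :=
  forall tau, L (subst (fun k => powS (tau k) m) a) (subst (fun k => powS (tau k) m) b).

Lemma pow_inst_rel_theory L m : is_com_theory L -> is_com_theory (pow_inst_rel L m).
Proof.
  intro HL. unfold pow_inst_rel; repeat split; intros.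
  - apply th_refl; auto.
  - apply th_sym; auto.
  - eapply th_trans; eauto.
  - simpl; apply th_mul; auto.
  - rewrite !subst_comp.
    chain (subst (fun k => powS (subst tau (s k)) m) a);
      [apply th_ac; auto; apply ac_eq_subst_pointwise; intro; apply subst_powS_vars|].
    chain (subst (fun k => powS (subst tau (s k)) m) b); [apply (H (fun k => subst tau (s k)))|].
    apply th_ac; auto; apply ac_eq_subst_pointwise; intro; apply ac_eq_sym, subst_powS_vars.
  - simpl; apply th_ac; auto; ac_solve.
  - simpl; apply th_ac; auto; ac_solve.
Qed.

Lemma modular_cond_ZM A : releq A (nil_rel 2) -> modular_cond A.
Proof.
  intros HA Y Z L HY HZ HL YA nZ YL ZAL a b (Hab & Hm).
  assert (nZn : ~ subrel Z (nil_rel 2)) by (intro HZn; apply nZ; intros ? ? ?; apply HA; auto).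
  destruct (period_of_not_sub_nil Z HZ nZn) as (m & Hm1 & X).
  assert (HYZ : subrel (vmeet Y Z) (pow_inst_rel L m)).
  { apply vmeet_min; [apply pow_inst_rel_theory; auto| |].
    - intros x y H tau; apply YL, th_subst; auto.
    - intros x y H tau. apply ZAL; split; [apply th_subst; auto|]. apply HA; right.
      split; apply len_subst_ge2; intro k; rewrite len_powS; pose proof (len_pos (tau k)); nia. }
  apply HA in Hab. destruct Hab as [Hab|(La&Lb)]; [apply th_ac; auto|].
  assert (Hp : forall t, 2 <= len t -> L t (subst (fun k => powS (Var k) m) t)).
  { intros t Ht. chain (powS t m).
    - apply ZAL; split.
      + apply (th_subst _ HZ _ _ (fun _ => t)) in X. rewrite subst_powS in X. exact X.
      + apply HA; right; rewrite len_powS; nia.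
    - apply th_ac; auto. pose proof (subst_powS_vars Var m t) as P. rewrite subst_id in P.
      apply ac_eq_sym; auto. }
  chain (subst (fun k => powS (Var k) m) a); auto.
  chain (subst (fun k => powS (Var k) m) b); [apply HYZ; auto|].
  apply th_sym; auto.
Qed.

(** * [SL] is neutral *)

Definition pow_absorbing (E : rel) (n : nat) : Prop :=
  E (powS x0 n) (Mul (powS x0 n) (powS x1 n)).

Lemma pow_absorbing_inst E n : is_com_theory E -> pow_absorbing E n ->
  forall p q, E (powS p n) (Mul (powS p n) (powS q n)).
Proof.
  intros HE H p q. apply (th_subst _ HE _ _ (fun k => match k with 0 => p | _ => q end)) in H.
  simpl in H. rewrite !subst_powS in H. exact H.
Qed.

Lemma pow_absorbing_mul E n j : is_com_theory E -> pow_absorbing E n ->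
  pow_absorbing E (S n * S j - 1).
Proof.
  intros HE H. pose proof (pow_absorbing_inst E n HE H (powS x0 j) (powS x1 j)) as H1.
  unfold pow_absorbing.
  chain (powS (powS x0 j) n); [apply th_ac; auto; ac_solve|].
  chain (Mul (powS (powS x0 j) n) (powS (powS x1 j) n)); auto.
  apply th_ac; auto. unfold ac_eq; intro x; simpl; rewrite !occ_powS. nia.
Qed.

(* The substitution [x_n |-> x^(len a) y], [x_k |-> x] otherwise. *)
Lemma factor_of_new_var Y a b n : is_com_theory Y -> Y a b -> occurs b n -> ~ occurs a n ->
  exists al c g, Y (powS x0 al) (Mul (powS x0 al) (mulpow (powS x1 c) x0 g)).
Proof.
  intros HY H Hb Ha. unfold occurs in Ha, Hb.
  set (la := len a). set (c := occ b n).
  set (sg := fun k => if Nat.eqb k n then Mul (powS x0 (la - 1)) x1 else x0).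
  assert (Hla : 1 <= la) by apply len_pos.
  assert (Csg : forall u x, occ (subst sg u) x =
     if Nat.eqb x 0 then len u - occ u n + occ u n * la
     else if Nat.eqb x 1 then occ u n else 0).
  { induction u; intro x; simpl.
    - unfold sg; destruct (Nat.eqb_spec n0 n); simpl; rewrite ?occ_powS;
        destruct x as [|[|x]]; simpl; eqbs; lia.
    - rewrite IHu1, IHu2. pose proof (occ_le_len u1 n); pose proof (occ_le_len u2 n).
      destruct x as [|[|x]]; simpl; lia. }
  exists (la - 1), (c - 1), (len b - c + (c - 1) * la).
  apply (th_subst _ HY _ _ sg) in H.
  chain (subst sg a).
  { apply th_ac; auto. intro x; rewrite Csg, occ_powS. destruct x as [|[|x]]; simpl; unfold la; lia. }
  chain (subst sg b); auto.
  apply th_ac; auto. intro x. pose proof (occ_le_len b n).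
  rewrite Csg; simpl; rewrite occ_mulpow, !occ_powS.
  destruct x as [|[|x]]; simpl; fold c; nia.
Qed.

Lemma pow_absorbing_of_factor Y al c g : is_com_theory Y ->
  Y (powS x0 al) (Mul (powS x0 al) (mulpow (powS x1 c) x0 g)) -> exists N, pow_absorbing Y N.
Proof.
  intros HY H. set (s := powS x0 al). set (f := S (c + g)). set (P := S c * f).
  assert (Hw : Y s (Mul s (powS x0 (c + g)))).
  { apply (th_subst _ HY _ _ (fun _ => x0)) in H. simpl in H.
    rewrite subst_mulpow, !subst_powS in H. simpl in H.
    chain (Mul s (mulpow (powS x0 c) x0 g)); auto.
    apply th_ac; auto; intros [|x]; simpl; rewrite occ_mulpow, !occ_powS; simpl; lia. }
  assert (Hy : Y s (Mul s (powS x1 (P - 1)))).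
  { chain (mulpow s (mulpow (powS x1 c) x0 g) f); [apply th_absorb_mulpow; auto|].
    chain (Mul (mulpow s (powS x0 (c + g)) g) (powS x1 (P - 1))).
    - apply th_ac; auto. unfold P, s; intros [|[|x]]; simpl; rewrite !occ_mulpow, !occ_powS;
        simpl; rewrite ?occ_powS; simpl; nia.
    - apply th_mulL; auto. apply th_sym; auto. apply th_absorb_mulpow; auto. }
  exists (S al * P - 1). unfold pow_absorbing.
  chain (mulpow s s (P - 1)).
  { apply th_ac; auto. unfold P, s; intros [|[|x]]; simpl; rewrite ?occ_mulpow, ?occ_powS; simpl; nia. }
  chain (mulpow (Mul s (powS (powS x1 (P - 1)) al)) s (P - 1)).
  { apply th_mulpow; auto. apply th_absorb_powS; auto. }
  apply th_ac; auto. unfold P, s; intros [|[|x]]; simpl;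
    rewrite ?occ_mulpow, ?occ_powS; simpl; rewrite ?occ_powS; simpl; nia.
Qed.

(* Substituting [x_m |-> s s] and fixing the variables of [s]. *)
Lemma absorb_of_new_var Z s t m : is_com_theory Z -> Z s t -> occurs t m -> ~ occurs s m ->
  exists q, (forall x, occurs q x -> occurs s x) /\ Z s (Mul s q).
Proof.
  intros HZ H Ht Hs.
  set (tau := fun k => if occurs_dec s k then Var k else Mul s s).
  assert (Es : subst tau s = s).
  { rewrite <- (subst_id s) at 2. apply subst_ext. intros k Hk. unfold tau.
    destruct (occurs_dec s k); tauto. }
  assert (Hge : forall u, occurs u m -> forall x, occ (tau m) x <= occ (subst tau u) x).
  { induction u; intros Hu x; simpl.
    - apply occurs_Var in Hu; subst; auto.
    - apply occurs_Mul in Hu as [Hu|Hu]; [specialize (IHu1 Hu x)|specialize (IHu2 Hu x)]; lia. }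
  assert (Htm : tau m = Mul s s) by (unfold tau; destruct (occurs_dec s m); tauto).
  destruct (ac_eq_factor s (subst tau t)) as (q & Hq).
  { intro x; specialize (Hge t Ht x); rewrite Htm in Hge; simpl in Hge; lia. }
  { destruct (exists_occurs s) as (x & Hx). exists x.
    specialize (Hge t Ht x); rewrite Htm in Hge; simpl in Hge. unfold occurs in Hx; lia. }
  exists q. split.
  - intros x Hx. assert (occurs (subst tau t) x) by (unfold occurs in *; rewrite Hq; simpl; lia).
    apply occurs_subst in H0 as (k & _ & Hk). unfold tau in Hk. destruct (occurs_dec s k).
    + apply occurs_Var in Hk; subst; auto.
    + apply occurs_Mul in Hk; tauto.
  - chain (subst tau t); [rewrite <- Es at 1; apply th_subst; auto|]. apply th_ac; auto.
Qed.

Lemma pow_absorbing_of_not_sub_SL Y : is_com_theory Y -> ~ subrel Y same_vars ->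
  exists N, pow_absorbing Y N.
Proof.
  intros HY Hn. apply not_all_ex_not in Hn as (a & Hn). apply not_all_ex_not in Hn as (b & Hn).
  apply imply_to_and in Hn as (H1 & H2).
  destruct (not_same_vars a b H2) as [(n & Hb & Ha)|(n & Ha & Hb)].
  - destruct (factor_of_new_var Y a b n HY H1 Hb Ha) as (al & c & g & H).
    eapply pow_absorbing_of_factor; eauto.
  - destruct (factor_of_new_var Y b a n HY (th_sym _ HY _ _ H1) Ha Hb) as (al & c & g & H).
    eapply pow_absorbing_of_factor; eauto.
Qed.

Lemma absorb_powS_of_new_var Y E N a b n : is_com_theory Y -> is_com_theory E ->
  subrel (vjoin same_vars Y) E -> pow_absorbing E N -> Y a b -> occurs b n -> ~ occurs a n ->
  E a (Mul a (powS (Mul a b) N)).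
Proof.
  intros HY HE CY KE H Hb Ha.
  destruct (absorb_of_new_var Y a b n HY H Hb Ha) as (q & Hq & H1).
  assert (H2 : Y a (Mul a (powS q N))) by (apply th_absorb_powS; auto).
  assert (E a (Mul a (powS q N))).
  { apply CY; split; auto. intro x; rewrite occurs_Mul, occurs_powS. split; [tauto|intros [?|?]; auto]. }
  chain (Mul a (powS q N)); auto.
  chain (Mul a (Mul (powS q N) (powS (Mul a b) N))); [apply th_mulR; auto; apply pow_absorbing_inst; auto|].
  apply CY; split.
  - intro x; rewrite !occurs_Mul, !occurs_powS, !occurs_Mul.
    split; [intros [?|[?|?]]; auto|intros [?|?]; auto].
  - chain (Mul (Mul a (powS q N)) (powS (Mul a b) N)); [apply th_ac; auto; ac_solve|].
    apply th_mulL; auto. apply th_sym; auto.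
Qed.

Lemma median_cond_SL A : releq A same_vars -> median_cond A.
Proof.
  intros HA Y Z L HY HZ HL nY nZ LAY LYZ LZA.
  assert (nYs : ~ subrel Y same_vars) by (intro H; apply nY; intros ? ? ?; apply HA; auto).
  assert (nZs : ~ subrel Z same_vars) by (intro H; apply nZ; intros ? ? ?; apply HA; auto).
  destruct (pow_absorbing_of_not_sub_SL Y HY nYs) as (n1 & K1).
  destruct (pow_absorbing_of_not_sub_SL Z HZ nZs) as (n2 & K2).
  set (N := S n1 * S n2 - 1).
  assert (KY : pow_absorbing Y N) by (apply pow_absorbing_mul; auto).
  assert (KZ : pow_absorbing Z N)
    by (unfold N; rewrite Nat.mul_comm; apply pow_absorbing_mul; auto).
  assert (KL : pow_absorbing L N) by (apply LYZ; split; [exact KY|exact KZ]).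
  assert (CL : subrel (vjoin same_vars Y) L) by (intros x y (?&?); apply LAY; split; auto; apply HA; auto).
  assert (CY : subrel (vjoin same_vars Y) Y) by (intros x y (?&?); auto).
  assert (P1 : forall a b, Y a b -> (exists n, occurs b n /\ ~ occurs a n) -> L a b).
  { intros a b H (n & Hb & Ha).
    assert (L1 : L a (Mul a (powS (Mul a b) N))) by (apply (absorb_powS_of_new_var Y L N a b n); auto).
    assert (L2 : L (Mul a (powS (Mul a b) N)) (Mul b (powS (Mul a b) N))).
    { apply CL; split; [|apply th_mulL; auto].
      intro x; rewrite !occurs_Mul, !occurs_powS, !occurs_Mul; tauto. }
    chain (Mul a (powS (Mul a b) N)); auto. chain (Mul b (powS (Mul a b) N)); auto.
    destruct (classic (exists m, occurs a m /\ ~ occurs b m)) as [(m & Ha' & Hb')|Hn].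
    - chain (Mul b (powS (Mul b a) N)); [apply th_ac; auto; ac_solve|]. apply th_sym; auto.
      apply (absorb_powS_of_new_var Y L N b a m); auto. apply th_sym; auto.
    - apply th_sym; auto. apply CL; split.
      + intro x; rewrite !occurs_Mul, !occurs_powS, !occurs_Mul. split; [auto|].
        intros [?|[?|?]]; auto. apply NNPP; intro; apply Hn; eauto.
      + chain a; [apply th_sym; auto|].
        chain (Mul a (powS (Mul a b) N)); [apply (absorb_powS_of_new_var Y Y N a b n); auto|].
        apply th_mulL; auto. }
  intros a b H. destruct (classic (same_vars a b)) as [Hc|Hc]; [apply CL; split; auto|].
  destruct (not_same_vars a b Hc) as [?|(n&?&?)]; [apply P1; auto|].
  apply th_sym; auto. apply P1; [apply th_sym; auto|eauto].
Qed.

Section ModularSL.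
Variables (Y Z : rel) (N : nat).
Hypotheses (HY : is_com_theory Y) (HZ : is_com_theory Z).
Hypotheses (YA : subrel Y same_vars) (KZ : pow_absorbing Z N).

Let G := gen (fun x y => Y x y \/ vjoin Z same_vars x y).

Let HG : is_com_theory G := gen_theory _.

Lemma G_of_Y x y : Y x y -> G x y. Proof. intros; apply gen_incl; auto. Qed.

Lemma G_of_Z x y : Z x y -> same_vars x y -> G x y. Proof. intros; apply gen_incl; right; split; auto. Qed.

Lemma G_same_vars : subrel G same_vars.
Proof. apply gen_min; [apply same_vars_theory|]. intros x y [?|(?&?)]; auto. Qed.

Definition absorbs (s : term) : Prop :=
  exists q, (forall x, occurs q x -> occurs s x) /\ G s (Mul s (powS q N)).

Lemma absorbs_G s t : G s t -> absorbs s -> absorbs t.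
Proof.
  intros H (q & Hq & H1). exists q. split; [intros x Hx; apply (G_same_vars s t H); auto|].
  chain s; [apply th_sym; auto|]. chain (Mul s (powS q N)); auto. apply th_mulL; auto.
Qed.

Lemma absorbs_MulL s r : absorbs s -> absorbs (Mul s r).
Proof.
  intros (q & Hq & H1). exists q; split; [intros x Hx; apply occurs_Mul; auto|].
  chain (Mul (Mul s (powS q N)) r); [apply th_mulL; auto|apply th_ac; auto; ac_solve].
Qed.

Lemma absorbs_MulR s r : absorbs s -> absorbs (Mul r s).
Proof.
  intros (q & Hq & H1). exists q; split; [intros x Hx; apply occurs_Mul; auto|].
  chain (Mul r (Mul s (powS q N))); [apply th_mulR; auto|apply th_ac; auto; ac_solve].
Qed.

Lemma absorbs_of_Z s q : (forall x, occurs q x -> occurs s x) -> Z s (Mul s q) -> absorbs s.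
Proof.
  intros Hq H. exists q. split; auto. apply G_of_Z; [apply th_absorb_powS; auto|].
  intro x; rewrite occurs_Mul, occurs_powS; split; [auto|intros [?|?]; auto].
Qed.

Lemma absorbs_of_Z_new_var s t : Z s t -> (exists m, occurs t m /\ ~ occurs s m) ->
  absorbs s /\ absorbs t.
Proof.
  intros H (m & Ht & Hs). destruct (absorb_of_new_var Z s t m HZ H Ht Hs) as (q & Hq & H1).
  split; [eapply absorbs_of_Z; eauto|].
  destruct (classic (exists m', occurs s m' /\ ~ occurs t m')) as [(m'&?&?)|Hn].
  - destruct (absorb_of_new_var Z t s m' HZ (th_sym _ HZ _ _ H)) as (q' & ? & ?); auto.
    eapply absorbs_of_Z; eauto.
  - apply (absorbs_of_Z t q).
    + intros x Hx. apply NNPP; intro; apply Hn; eauto.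
    + chain s; [apply th_sym; auto|]. chain (Mul s q); auto. apply th_mulL; auto.
Qed.

Lemma absorbs_of_Z_not_same_vars s t : Z s t -> ~ same_vars s t -> absorbs s /\ absorbs t.
Proof.
  intros H Hc. destruct (not_same_vars s t Hc) as [?|(m&?&?)]; [apply absorbs_of_Z_new_var; auto|].
  destruct (absorbs_of_Z_new_var t s) as (?&?); eauto. apply th_sym; auto.
Qed.

(* Multiplying by a term [w] containing all variables makes both sides of an identity of [Z]
   have the same variables, which puts it in [G]. *)
Definition padded_G (C : nat -> Prop) (x y : term) : Prop :=
  forall sg, (forall k z, occurs (sg k) z -> C z) -> forall w, (forall z, occurs w z <-> C z) ->
  G (Mul (subst sg x) w) (Mul (subst sg y) w).

Lemma padded_G_theory C : is_com_theory (padded_G C).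
Proof.
  unfold padded_G; repeat split; intros.
  - apply th_refl; auto.
  - apply th_sym; auto.
  - eapply th_trans; eauto.
  - assert (W1 : forall u z, occurs (Mul (subst sg u) w) z <-> C z).
    { intros u z; rewrite occurs_Mul, occurs_subst.
      split; [intros [(k&?&?)|?]; eauto; apply H2; auto|]. intro; right; apply H2; auto. }
    simpl. chain (Mul (subst sg a) (Mul (subst sg c) w)); [apply th_ac; auto; ac_solve|].
    chain (Mul (subst sg b) (Mul (subst sg c) w)); [apply H; auto|].
    chain (Mul (subst sg c) (Mul (subst sg b) w)); [apply th_ac; auto; ac_solve|].
    chain (Mul (subst sg d) (Mul (subst sg b) w)); [apply H0; auto|]. apply th_ac; auto; ac_solve.
  - rewrite !subst_comp. apply H; auto. intros k z Hz. apply occurs_subst in Hz as (j & ? & ?). eauto.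
  - simpl; apply th_ac; auto; ac_solve.
  - simpl; apply th_ac; auto; ac_solve.
Qed.

Lemma vmeet_sub_padded_G C : subrel (vmeet Y Z) (padded_G C).
Proof.
  apply vmeet_min; [apply padded_G_theory| |].
  - intros x y H sg Hs w Hw. apply G_of_Y. apply th_mulL; auto. apply th_subst; auto.
  - intros x y H sg Hs w Hw. apply G_of_Z; [apply th_mulL; auto; apply th_subst; auto|].
    intro z. rewrite !occurs_Mul, !occurs_subst.
    split; intros [(k&?&?)|?]; right; auto; apply Hw; eauto.
Qed.

Definition G_or_absorbs (x y : term) : Prop :=
  forall sg, G (subst sg x) (subst sg y) \/ (absorbs (subst sg x) /\ absorbs (subst sg y)).

Lemma G_or_absorbs_theory : is_com_theory G_or_absorbs.
Proof.
  unfold G_or_absorbs; repeat split; intros.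
  - left; apply th_refl; auto.
  - destruct (H sg) as [?|(?&?)]; [left; apply th_sym|right]; auto.
  - destruct (H sg) as [?|(?&?)], (H0 sg) as [?|(?&?)].
    + left; eapply th_trans; eauto.
    + right; split; auto. apply (absorbs_G (subst sg b)); auto. apply th_sym; auto.
    + right; split; auto. apply (absorbs_G (subst sg b)); auto.
    + right; auto.
  - simpl. destruct (H sg) as [?|(?&?)], (H0 sg) as [?|(?&?)].
    + left; apply th_mul; auto.
    + right; split; apply absorbs_MulR; auto.
    + right; split; apply absorbs_MulL; auto.
    + right; split; apply absorbs_MulL; auto.
  - rewrite !subst_comp. apply H.
  - left; simpl; apply th_ac; auto; ac_solve.
  - left; simpl; apply th_ac; auto; ac_solve.
Qed.

Lemma vmeet_sub_G_or_absorbs : subrel (vmeet Y Z) G_or_absorbs.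
Proof.
  apply vmeet_min; [apply G_or_absorbs_theory| |].
  - intros x y H sg. left. apply G_of_Y, th_subst; auto.
  - intros x y H sg. destruct (classic (same_vars (subst sg x) (subst sg y))) as [Hc|Hc].
    + left; apply G_of_Z; auto; apply th_subst; auto.
    + right; apply absorbs_of_Z_not_same_vars; auto; apply th_subst; auto.
Qed.

Lemma absorbs_pad s q r : (forall x, occurs q x -> occurs s x) ->
  (forall x, occurs r x -> occurs s x) ->
  G s (Mul s (powS q N)) -> G s (Mul s (Mul (powS q N) (powS r N))).
Proof.
  intros Hq Hr H. chain (Mul s (powS q N)); auto. apply G_of_Z.
  - apply th_mulR; auto. apply pow_absorbing_inst; auto.
  - intro x; rewrite !occurs_Mul, !occurs_powS.
    split; [intros [?|?]; auto|intros [?|[?|?]]; auto].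
Qed.

Lemma same_vars_vmeet_sub_G : subrel (vjoin same_vars (vmeet Y Z)) G.
Proof.
  intros a b (Hab & Hm).
  set (sg0 := fun k => if occurs_dec a k then Var k else a).
  assert (Hsg0 : forall k z, occurs (sg0 k) z -> occurs a z).
  { intros k z. unfold sg0; destruct (occurs_dec a k); auto. intro H; apply occurs_Var in H; subst; auto. }
  assert (Ea : subst sg0 a = a).
  { rewrite <- (subst_id a) at 2. apply subst_ext. intros k Hk. unfold sg0.
    destruct (occurs_dec a k); tauto. }
  assert (Eb : subst sg0 b = b).
  { rewrite <- (subst_id b) at 2. apply subst_ext. intros k Hk. unfold sg0.
    destruct (occurs_dec a k); auto. exfalso; apply n, Hab; auto. }
  destruct (vmeet_sub_G_or_absorbs a b Hm sg0) as [H|(Ha & Hb)]; [rewrite Ea, Eb in H; auto|].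
  rewrite Ea in Ha; rewrite Eb in Hb.
  destruct Ha as (q1 & Hq1 & Ha). destruct Hb as (q2 & Hq2 & Hb).
  set (X := Mul (powS q1 N) (powS (Mul q2 a) N)).
  assert (G1 : G a (Mul a X)).
  { apply absorbs_pad; auto. intros x Hx; apply occurs_Mul in Hx as [?|?]; auto. apply Hab; auto. }
  assert (G2 : G b (Mul b (Mul (powS q2 N) (powS (Mul q1 a) N)))).
  { apply absorbs_pad; auto. intros x Hx; apply Hab; apply occurs_Mul in Hx as [?|?]; auto. }
  chain (Mul a X); auto. chain (Mul b X).
  - pose proof (vmeet_sub_padded_G (occurs a) a b Hm sg0 Hsg0 X) as S1. rewrite Ea, Eb in S1.
    apply S1. intro z. unfold X; rewrite !occurs_Mul, !occurs_powS, !occurs_Mul. split; [|auto].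
    intros [Hz|[Hz|Hz]]; [apply Hq1; auto|apply Hab, Hq2; auto|auto].
  - chain (Mul b (Mul (powS q2 N) (powS (Mul q1 a) N))); [apply th_ac; auto; unfold X; ac_solve|].
    apply th_sym; auto.
Qed.

End ModularSL.

Lemma modular_cond_SL A : releq A same_vars -> modular_cond A.
Proof.
  intros HA Y Z L HY HZ HL YA nZ YL ZAL.
  assert (nZs : ~ subrel Z same_vars) by (intro H; apply nZ; intros ? ? ?; apply HA; auto).
  destruct (pow_absorbing_of_not_sub_SL Z HZ nZs) as (N & KZ).
  intros a b (Hab & Hm).
  apply (gen_min (fun x y => Y x y \/ vjoin Z same_vars x y) L HL).
  - intros x y [?|(?&?)]; auto. apply ZAL; split; auto; apply HA; auto.
  - apply (same_vars_vmeet_sub_G Y Z N); auto; [intros x y ?; apply HA, YA; auto|].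
    split; auto; apply HA; auto.
Qed.

(** * A neutral atom is [SL] or [ZM] *)

Lemma SL_maximal_new_var V a b n : is_com_theory V -> subrel same_vars V ->
  V a b -> occurs b n -> ~ occurs a n -> V x0 x1.
Proof.
  intros HV CV H Hb Ha.
  assert (T : forall i j, i <> j -> V (Var i) (Mul (Var i) (Var j)) \/ V (Var i) (Var j)).
  { intros i j Hij. set (sg := fun k => if Nat.eqb k n then Var j else Var i).
    apply (th_subst _ HV _ _ sg) in H.
    assert (A1 : same_vars (subst sg a) (Var i)).
    { intro x; rewrite occurs_subst, occurs_Var. split.
      - intros (k & Hk & Hx). unfold sg in Hx.
        destruct (Nat.eqb_spec k n); [subst; tauto|apply occurs_Var in Hx; auto].
      - intros <-. destruct (exists_occurs a) as (k & Hk). exists k; split; auto. unfold sg.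
        destruct (Nat.eqb_spec k n); [subst; tauto|apply occurs_Var; auto]. }
    assert (Hj : occurs (subst sg b) j).
    { apply occurs_subst; exists n; split; auto. unfold sg; rewrite Nat.eqb_refl; apply occurs_Var; auto. }
    assert (Hsub : forall x, occurs (subst sg b) x -> x = i \/ x = j).
    { intros x Hx. apply occurs_subst in Hx as (k & _ & Hx). unfold sg in Hx.
      destruct (Nat.eqb k n); apply occurs_Var in Hx; auto. }
    assert (Vb : V (Var i) (subst sg b)) by (chain (subst sg a); [apply th_sym, CV; auto|auto]).
    destruct (classic (occurs (subst sg b) i)) as [Hi|Hi]; [left|right]; chain (subst sg b); auto;
      apply CV; intro x; rewrite ?occurs_Mul, !occurs_Var.
    - split; [intro Hx; apply Hsub in Hx; intuition|intros [<-| <-]; auto].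
    - split; [intro Hx; destruct (Hsub x Hx); subst; tauto|intros <-; auto]. }
  destruct (T 0 1) as [T1|T1]; auto. destruct (T 1 0) as [T2|T2]; auto; [|apply th_sym; auto].
  chain (Mul x0 x1); auto. chain (Mul x1 x0); [apply th_ac; auto; ac_solve|]. apply th_sym; auto.
Qed.

Lemma SL_maximal V : is_com_theory V -> subrel SL V -> ~ releq V full -> releq V SL.
Proof.
  intros HV HS Hf.
  assert (CV : subrel same_vars V) by (intros a b H; apply HS, SL_same_vars; auto).
  assert (Vsv : subrel V same_vars).
  { intros a b H. apply NNPP; intro Hc. apply Hf, full_of_x0_x1; auto.
    destruct (not_same_vars a b Hc) as [(n&?&?)|(n&?&?)]; [eapply SL_maximal_new_var; eauto|].
    apply (SL_maximal_new_var V b a n); auto. apply th_sym; auto. }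
  intros a b; split; [intro; apply SL_same_vars, Vsv; auto|intro; apply HS; auto].
Qed.

Definition nil_sv_rel (n : nat) (a b : term) : Prop :=
  nil_rel (S n) a b \/ (len a = n /\ len b = n /\ same_vars a b).

Lemma len_subst_eq s a : (forall k, occurs a k -> len (s k) = 1) -> len (subst s a) = len a.
Proof.
  induction a; simpl; intro H; [apply H, occurs_Var; auto|].
  rewrite IHa1, IHa2; auto; intros k Hk; apply H, occurs_Mul; auto.
Qed.

Lemma len_subst_gt s a k : occurs a k -> 2 <= len (s k) -> len a + 1 <= len (subst s a).
Proof.
  induction a; simpl; intros Hk H.
  - apply occurs_Var in Hk; subst; lia.
  - pose proof (len_le_subst s a1); pose proof (len_le_subst s a2).
    apply occurs_Mul in Hk as [Hk|Hk]; [specialize (IHa1 Hk H)|specialize (IHa2 Hk H)]; lia.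
Qed.

Lemma nil_sv_rel_subst n s a b : len a = n -> len b = n -> same_vars a b ->
  nil_sv_rel n (subst s a) (subst s b).
Proof.
  intros H1 H2 H3. pose proof same_vars_theory as HC.
  destruct (classic (exists k, occurs a k /\ 2 <= len (s k))) as [(k&Hk&Hl)|Hn].
  - left; right. pose proof (len_subst_gt s a k Hk Hl).
    assert (Hb : occurs b k) by (apply H3; auto). pose proof (len_subst_gt s b k Hb Hl). lia.
  - right. assert (Hs : forall k, occurs a k -> len (s k) = 1).
    { intros k Hk. pose proof (len_pos (s k)). destruct (Nat.eq_dec (len (s k)) 1); auto.
      exfalso; apply Hn; exists k; split; auto; lia. }
    rewrite !len_subst_eq; auto; [refine (conj _ (conj _ _)); auto; apply (th_subst _ HC); auto|].
    intros k Hk; apply Hs, H3; auto.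
Qed.

Lemma nil_sv_rel_theory n : is_com_theory (nil_sv_rel n).
Proof.
  pose proof (nil_rel_theory (S n)) as HT. pose proof same_vars_theory as HC.
  unfold nil_sv_rel; repeat split; intros.
  - left; apply th_refl; auto.
  - destruct H as [H|H]; [left; apply th_sym; auto|right].
    destruct H as (?&?&?); refine (conj _ (conj _ _)); auto. apply (th_sym _ HC); auto.
  - destruct H as [H|(H1&H2&H3)], H0 as [H0|(H4&H5&H6)].
    + left; eapply th_trans; eauto.
    + destruct H as [H|H]; [|lia]. right. pose proof H as Hac. apply ac_eq_len in H.
      refine (conj _ (conj _ _)); try lia. apply (th_trans _ HC _ b); auto. apply ac_eq_same_vars; auto.
    + destruct H0 as [H0|H0]; [|lia]. right. pose proof H0 as Hac. apply ac_eq_len in H0.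
      refine (conj _ (conj _ _)); try lia. apply (th_trans _ HC _ b); auto. apply ac_eq_same_vars; auto.
    + right; refine (conj _ (conj _ _)); auto. apply (th_trans _ HC _ b); auto.
  - left. destruct H as [[H|H]|(?&?&?)], H0 as [[H0|H0]|(?&?&?)];
      try (left; intro x; simpl; rewrite ?H, ?H0; auto; fail);
      right; simpl; try apply ac_eq_len in H; try apply ac_eq_len in H0;
      pose proof (len_pos a); pose proof (len_pos b); pose proof (len_pos c); pose proof (len_pos d); lia.
  - destruct H as [H|(H1&H2&H3)]; [left; apply th_subst; auto|]. apply nil_sv_rel_subst; auto.
  - left; left; ac_solve.
  - left; left; ac_solve.
Qed.

Definition x2y := Mul (Mul x0 x0) x1.
Definition xy2 := Mul (Mul x0 x1) x1.

Lemma not_nil_rel_x2y_xy2 : ~ nil_rel 4 x2y xy2.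
Proof. intros [H|H]; [specialize (H 0); simpl in H; lia|simpl in H; lia]. Qed.

Lemma nil_sv_rel_x2y_xy2 : nil_sv_rel 3 x2y xy2.
Proof. right. refine (conj eq_refl (conj eq_refl _)). intro x; unfold x2y, xy2; rewrite !occurs_Mul; tauto. Qed.

(* Identify the variable whose multiplicities in [a] and [b] differ with [x], all others with [y]. *)
Lemma x2y_xy2_of_len3 V a b : is_com_theory V -> V a b -> len a = 3 -> len b = 3 ->
  same_vars a b -> ~ ac_eq a b -> V x2y xy2.
Proof.
  intros HV H La Lb Hc Hn.
  assert (Hp : exists p, occ a p <> occ b p).
  { apply NNPP; intro H'. apply Hn. intro x. apply NNPP; intro; apply H'; eauto. }
  destruct Hp as (p & Hp).
  pose proof (occ_le_len a p); pose proof (occ_le_len b p).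
  assert (Hpos : 0 < occ a p /\ 0 < occ b p) by (specialize (Hc p); unfold occurs in Hc; lia).
  assert (N3 : forall u v, len u = 3 -> len v = 3 -> same_vars u v -> occ u p = 3 -> occ v p = 3).
  { intros u v Lu Lv Huv E3. rewrite <- Lv. apply occ_only. intros k Hk.
    assert (Hnc : ~ occurs u k) by (unfold occurs; pose proof (occ2_le_len u p k); lia).
    destruct (Nat.eq_dec (occ v k) 0); auto. exfalso; apply Hnc, Huv; unfold occurs; lia. }
  assert (occ a p <> 3) by (intro E3; apply Hp; rewrite E3; symmetry; apply (N3 a b); auto).
  assert (occ b p <> 3).
  { intro E3; apply Hp; rewrite E3; apply (N3 b a); auto. apply th_sym; auto; apply same_vars_theory. }
  set (sg := fun k => if Nat.eqb k p then x0 else x1).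
  assert (Cs : forall u x, occ (subst sg u) x =
    if Nat.eqb x 0 then occ u p else if Nat.eqb x 1 then len u - occ u p else 0).
  { induction u; intro x; simpl.
    - unfold sg; destruct (Nat.eqb_spec n p); simpl; destruct x as [|[|x]]; simpl; eqbs; lia.
    - rewrite IHu1, IHu2. pose proof (occ_le_len u1 p); pose proof (occ_le_len u2 p).
      destruct x as [|[|x]]; simpl; lia. }
  apply (th_subst _ HV _ _ sg) in H.
  assert (occ a p = 2 /\ occ b p = 1 \/ occ a p = 1 /\ occ b p = 2) as [(E1&E2)|(E1&E2)] by lia.
  - chain (subst sg a); [apply th_ac; auto; intro x; rewrite Cs; destruct x as [|[|x]]; simpl; lia|].
    chain (subst sg b); auto. apply th_ac; auto; intro x; rewrite Cs; destruct x as [|[|x]]; simpl; lia.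
  - chain (subst sg b); [apply th_ac; auto; intro x; rewrite Cs; destruct x as [|[|x]]; simpl; lia|].
    chain (subst sg a); [apply th_sym; auto|].
    apply th_ac; auto; intro x; rewrite Cs; destruct x as [|[|x]]; simpl; lia.
Qed.

Lemma idempotent_of_x2y_xy2 V m : is_com_theory V -> has_period V m -> V x2y xy2 ->
  V x0 (Mul x0 x0).
Proof.
  intros HV P H. pose proof P as (Hm & _).
  (* [y |-> x^2] gives [x^4 = x^5], which the period collapses to [x = x^2]. *)
  apply (th_subst _ HV _ _ (fun k => match k with 0 => x0 | _ => Mul x0 x0 end)) in H. simpl in H.
  assert (E4 : V (powS x0 3) (powS x0 4)).
  { chain (Mul (Mul x0 x0) (Mul x0 x0)); [apply th_ac; auto; ac_solve|].
    chain (Mul (Mul x0 (Mul x0 x0)) (Mul x0 x0)); auto; apply th_ac; auto; ac_solve. }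
  pose proof (th_mulpow V HV _ _ x0 (4 * m - 3) E4) as E5.
  pose proof (period_powS V m HV P 4 x0) as X4.
  chain (powS x0 (4 * m)); auto. chain (powS x0 (4 * m + 1)).
  - chain (mulpow (powS x0 3) x0 (4 * m - 3)); [apply th_ac; auto; ac_solve|].
    chain (mulpow (powS x0 4) x0 (4 * m - 3)); auto. apply th_ac; auto; ac_solve.
  - chain (Mul (powS x0 (4 * m)) x0); [apply th_ac; auto; ac_solve|].
    apply th_mulL; auto. apply th_sym; auto.
Qed.

Lemma full_of_period_nil V m : is_com_theory V -> has_period V m -> subrel (nil_rel 4) V ->
  releq V full.
Proof.
  intros HV P H. pose proof P as (Hm & _). apply full_of_x0_x1; auto.
  chain (powS x0 (4 * m)); [apply (period_powS V m); auto|].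
  chain (powS x1 (4 * m)); [apply H; right; rewrite !len_powS; simpl; lia|].
  apply th_sym; auto; apply (period_powS V m); auto.
Qed.

Lemma atom_sub_full V W : atom V -> is_com_theory W -> subrel V W -> ~ subrel W V ->
  forall a b, W a b.
Proof.
  intros (HV & Hf & Ha) HW H1 H2 a b. destruct (Ha W HW H1) as [H|H]; [apply H; constructor|].
  exfalso; apply H2; intros x y; apply H.
Qed.

Lemma neutral_atom_SL_or_ZM V : atom V -> neutral V -> releq V SL \/ releq V ZM.
Proof.
  intros HA HN. pose proof HA as (HV & Hf & Ha).
  apply NNPP; intro Hn. apply not_or_and in Hn as (nS & nZ).
  assert (nVZ : ~ subrel V (nil_rel 2)).
  { intro H. assert (HZ : vle ZM V) by (intros a b ?; apply ZM_nil_rel, H; auto).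
    destruct (Ha ZM (gen_theory _) HZ) as [H1|H1].
    - assert (H0 : nil_rel 2 x0 x1) by (apply (proj1 (ZM_nil_rel x0 x1)), (proj2 (H1 x0 x1)); constructor).
      destruct H0 as [H0|H0]; [specialize (H0 0)|]; simpl in H0; lia.
    - apply nZ; intros a b; specialize (H1 a b); tauto. }
  destruct (period_of_not_sub_nil V HV nVZ) as (m & P).
  assert (nI : ~ V x0 (Mul x0 x0)).
  { intro H. apply nS, SL_maximal; auto. apply gen_min; auto. intros a b (->&->). apply th_sym; auto. }
  assert (ne : ~ V x2y xy2) by (intro; apply nI, (idempotent_of_x2y_xy2 V m); auto).
  assert (nN : ~ subrel (nil_rel 4) V) by (intro; apply Hf, (full_of_period_nil V m); auto).
  assert (HY := nil_rel_theory 4). assert (HZ := nil_sv_rel_theory 3).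
  assert (L : vmeet (vmeet (vjoin V (nil_rel 4)) (vjoin (nil_rel 4) (nil_sv_rel 3)))
                (vjoin (nil_sv_rel 3) V) x2y xy2).
  { apply (HN _ _ HY HZ). repeat split.
    - apply (atom_sub_full V); auto; [apply gen_theory|intros a b; apply vmeet_l|].
      intro H; apply nN; intros a b Hab; apply H, vmeet_r; auto.
    - apply vmeet_r, nil_sv_rel_x2y_xy2.
    - apply (atom_sub_full V); auto; [apply gen_theory|intros a b; apply vmeet_r|].
      intro H; apply nN; intros a b Hab; apply H, vmeet_l; left; auto. }
  (* All three joinands lie in [nil_rel 4], which does not contain [x2y = xy2]. *)
  apply not_nil_rel_x2y_xy2. revert L. apply vmeet_min; auto.
  - apply vmeet_min; auto; intros a b (?&?); auto.
  - intros a b ([?|(La&Lb&Hc)] & Hv); auto. destruct (classic (ac_eq a b)) as [Hac|Hac]; [left; auto|].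
    exfalso; apply ne. eapply x2y_xy2_of_len3; eauto.
Qed.

Theorem mainTheorem11 (V : rel) :
  atom V -> (neutral V <-> (releq V SL \/ releq V ZM)).
Proof.
  intros HA. split; [apply neutral_atom_SL_or_ZM; auto|]. destruct HA as (HV & _ & _).
  intros [H|H]; apply neutral_of_conds; auto.
  - apply modular_cond_SL. intros a b; rewrite (H a b); apply SL_same_vars.
  - apply median_cond_SL. intros a b; rewrite (H a b); apply SL_same_vars.
  - apply modular_cond_ZM. intros a b; rewrite (H a b); apply ZM_nil_rel.
  - apply median_cond_ZM. intros a b; rewrite (H a b); apply ZM_nil_rel.
Qed.
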